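(* In the setting described in the context, assume (F1) and (F2). Then for all $t\ge0$, $$\|w(t+1)-n\pi\otimes\bar w(t+1)\|_{\pi\otimes1_d}\le\sigma_W(1+\alpha L\delta)\|w(t)-n\pi\otimes\bar w(t)\|_{\pi\otimes1_d}+\alpha L\sigma_WD_1[t]\,\|\bar w(t)-w_*\|+\alpha\sigma_WD_2[t],$$ where $D_1[t]=\delta\|1_n-n\pi\|_\pi\sigma_W^t+\sqrt{\sum_{j=1}^n1/\pi_j}$ and $D_2[t]=L\delta\|1_n-n\pi\|_\pi\sigma_W^t\|w_*\|+\|\nabla F(1_n\otimes w_* )\|_{\pi\otimes1_d}$.
   Context: $G=(V,E)$ directed on $\{1,\dots,n\}$, self-loop at each vertex, strongly connected; $d_j=|\{i:(j,i)\in E\}|$, $W_{ij}=1/d_j$ if $(j,i)\in E$, else $0$. $\pi$: $W\pi=\pi$, $\pi_i>0$, $\sum\pi_i=1$; $W^\infty=\pi1_n^\top$. $\|x\|_\pi=(\sum_ix_i^2/\pi_i)^{1/2}$ on $\mathbb R^n$, $|||\cdot|||_\pi$ the induced operator norm, $\sigma_W=|||W-W^\infty|||_\pi$ (known $<1$). On $\mathbb R^{nd}$, $\|x\|_{\pi\otimes1_d}=(\sum_i\|x_i\|^2/\pi_i)^{1/2}$. $v\otimes u=\mathrm{col}(v_1u,\dots,v_nu)$. $f_i:\mathbb R^d\to\mathbb R$, $f=\frac1n\sum f_i$; (F1) each $\nabla f_i$ is $L_i$-Lipschitz, $L=\max L_i$; (F2) $f$ is $\beta$-strongly convex, $\beta>0$;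 $w_*$ is the minimizer of $f$. $\nabla F(x)=\mathrm{col}(\nabla f_1(x_1),\dots,\nabla f_n(x_n))$. Algorithm with stepsize $\alpha>0$: given $w(0)\in\mathbb R^{nd}$, $y(0)=1_n$; for $t\ge0$: $z_i(t)=w_i(t)/y_i(t)$, $x_i(t)=w_i(t)-\alpha\nabla f_i(z_i(t))$, $w_i(t+1)=\sum_jW_{ij}x_j(t)$, $y_i(t+1)=\sum_jW_{ij}y_j(t)$. $\bar w(t)=\frac1n\sum_iw_i(t)$, $\delta=\sup_{t\ge0}\max_i1/y_i(t)$. *)

From HB Require Import structures.
From mathcomp Require Import all_boot all_order all_algebra.
From mathcomp Require Import all_classical all_reals all_analysis.
Set Implicit Arguments. Unset Strict Implicit. Unset Printing Implicit Defensive.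
Import Order.TTheory GRing.Theory Num.Theory.
Import numFieldNormedType.Exports.
Local Open Scope classical_set_scope.
Local Open Scope ring_scope.

Section Defs.
Variable R : realType.

Definition dotv (d : nat) (u v : 'rV[R]_d) : R := \sum_(k < d) u 0 k * v 0 k.
Definition enorm (d : nat) (u : 'rV[R]_d) : R := Num.sqrt (\sum_(k < d) u 0 k ^+ 2).

Definition pinorm (n : nat) (pi : 'cV[R]_n) (x : 'cV[R]_n) : R :=
  Num.sqrt (\sum_(i < n) x i 0 ^+ 2 / pi i 0).

(* ||x||_{pi (x) 1_d} on R^{nd}; x is stored as an n x d matrix whose i-th row is x_i *)
Definition pmnorm (n d : nat) (pi : 'cV[R]_n) (X : 'M[R]_(n, d)) : R :=
  Num.sqrt (\sum_(i < n) enorm (row i X) ^+ 2 / pi i 0).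

Definition outdeg (n : nat) (E : rel 'I_n) (j : 'I_n) : nat := #|[set i | E j i]|.

Definition Wmat (n : nat) (E : rel 'I_n) : 'M[R]_n :=
  \matrix_(i, j) (if E j i then ((outdeg E j)%:R)^-1 else 0).

Definition Winf (n : nat) (pi : 'cV[R]_n) : 'M[R]_n := pi *m const_mx 1.

Definition sigmaW (n : nat) (W : 'M[R]_n) (pi : 'cV[R]_n) : R :=
  sup [set r | exists x : 'cV[R]_n, x != 0 /\
                 r = pinorm pi ((W - Winf pi) *m x) / pinorm pi x].

Definition gradF (n d : nat) (g : 'I_n -> 'rV[R]_d -> 'rV[R]_d) (X : 'M[R]_(n, d))
  : 'M[R]_(n, d) := \matrix_(i < n) g i (row i X).

Fixpoint yseq (n : nat) (W : 'M[R]_n) (t : nat) : 'cV[R]_n :=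
  match t with
  | 0 => const_mx 1
  | t'.+1 => W *m yseq W t'
  end.

Fixpoint wseq (n d : nat) (W : 'M[R]_n) (g : 'I_n -> 'rV[R]_d -> 'rV[R]_d)
    (alpha : R) (w0 : 'M[R]_(n, d)) (t : nat) : 'M[R]_(n, d) :=
  match t with
  | 0 => w0
  | t'.+1 =>
      let wt := wseq W g alpha w0 t' in
      let yt := yseq W t' in
      let zt := \matrix_(i, k) (wt i k / yt i 0) in
      W *m (wt - alpha *: gradF g zt)
  end.

Definition wbar (n d : nat) (X : 'M[R]_(n, d)) : 'rV[R]_d :=
  (n%:R)^-1 *: \sum_(i < n) row i X.

Definition deltaY (n : nat) (W : 'M[R]_n) : R :=
  sup [set r | exists t : nat, exists i : 'I_n, r = (yseq W t i 0)^-1].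

End Defs.

From HB Require Import structures.
From mathcomp Require Import all_boot all_order all_algebra.
From mathcomp Require Import all_classical all_reals all_analysis.
From mathcomp Require Import ring lra.
Set Implicit Arguments. Unset Strict Implicit. Unset Printing Implicit Defensive.
Import Order.TTheory GRing.Theory Num.Theory.
Import numFieldNormedType.Exports.
Local Open Scope classical_set_scope.
Local Open Scope ring_scope.

(* Since the columns of W sum to one, [w(t+1) - n pi (x) wbar(t+1) = (W - W^inf) x(t)], and
   [W - W^inf] annihilates [n pi (x) v]; so the consensus error contracts by sigma_W up to
   the gradient term [alpha (W - W^inf) grad F(z(t))]. By (F1) that term is at most L times
   the deviation of z(t) from [1 (x) w_*] plus [grad F] at [1 (x) w_*], and
   [z_i - w_* = (w_i - n pi_i wbar) / y_i + (n pi_i - y_i) wbar / y_i + wbar - w_*],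
   with [1 / y_i <= delta] and [y(t) - n pi = (W - W^inf)^t (1 - n pi)]. The supremum delta
   is finite because self-loops and strong connectivity force [y_i(t) >= n^-n]. *)

Section WeightedNorm.
Variables (R : realType) (T : finType) (c : T -> R).
Hypothesis c_ge0 : forall x, 0 <= c x.

Definition wnorm (u : T -> R) : R := Num.sqrt (\sum_x c x * u x ^+ 2).

Lemma wnorm_ge0 u : 0 <= wnorm u.
Proof. exact: sqrtr_ge0. Qed.

Lemma wsum_sqr_ge0 u : 0 <= \sum_x c x * u x ^+ 2.
Proof. by rewrite sumr_ge0 // => x _; rewrite mulr_ge0 ?sqr_ge0. Qed.

Lemma wnorm_le u v : (forall x, `|u x| <= `|v x|) -> wnorm u <= wnorm v.
Proof.
move=> uv; rewrite ler_sqrt ?wsum_sqr_ge0 //; apply: ler_sum => x _.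
rewrite ler_wpM2l // -[u x ^+ 2]real_normK ?num_real // -[v x ^+ 2]real_normK ?num_real //.
by rewrite lerXn2r ?nnegrE.
Qed.

Lemma wnorm_normr u : wnorm (fun x => `|u x|) = wnorm u.
Proof. by apply/eqP; rewrite eq_le !wnorm_le // => x; rewrite normr_id. Qed.

Lemma wnormZ k u : wnorm (fun x => k * u x) = `|k| * wnorm u.
Proof.
rewrite /wnorm -sqrtr_sqr -sqrtrM ?sqr_ge0 // mulr_sumr.
by congr Num.sqrt; apply: eq_bigr => x _; ring.
Qed.

Lemma wsum_CauchySchwarz u v :
  (\sum_x c x * (u x * v x)) ^+ 2 <=
  (\sum_x c x * u x ^+ 2) * (\sum_x c x * v x ^+ 2).
Proof.
set A := \sum_x c x * u x ^+ 2; set B := \sum_x c x * v x ^+ 2.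
set C := \sum_x c x * (u x * v x).
have [B0|B_neq0] := eqVneq B 0.
  suff -> : C = 0 by rewrite B0 expr0n mulr0.
  rewrite /C big1 // => x _.
  have cv0 : c x * v x ^+ 2 = 0.
    by apply: (psumr_eq0P _ B0) => // y _; rewrite mulr_ge0 ?sqr_ge0.
  have /eqP : (c x * v x) ^+ 2 = 0.
    by rewrite exprMn expr2 -mulrA cv0 mulr0.
  by rewrite sqrf_eq0 mulrCA => /eqP ->; rewrite mulr0.
have B_gt0 : 0 < B by rewrite lt_def B_neq0 wsum_sqr_ge0.
have : 0 <= \sum_x c x * (B * u x - C * v x) ^+ 2 by exact: wsum_sqr_ge0.
have -> : \sum_x c x * (B * u x - C * v x) ^+ 2 = B * (A * B - C ^+ 2).
  rewrite (eq_bigr (fun x => B ^+ 2 * (c x * u x ^+ 2) - (2 * B * C) * (c x * (u x * v x))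
                            + C ^+ 2 * (c x * v x ^+ 2))) => [|x _]; last by ring.
  by rewrite big_split /= sumrB -!mulr_sumr -/A -/B -/C; ring.
by rewrite pmulr_rge0 // subr_ge0.
Qed.

Lemma wnormD u v : wnorm (fun x => u x + v x) <= wnorm u + wnorm v.
Proof.
rewrite -[_ + _]ger0_norm ?addr_ge0 ?wnorm_ge0 // -sqrtr_sqr ler_sqrt ?sqr_ge0 //.
rewrite sqrrD !sqr_sqrtr ?wsum_sqr_ge0 //.
have -> : \sum_x c x * (u x + v x) ^+ 2 =
    \sum_x c x * u x ^+ 2 + \sum_x c x * v x ^+ 2 + 2 * \sum_x c x * (u x * v x).
  by rewrite mulr_sumr -!big_split; apply: eq_bigr => x _ /=; ring.
have CS : \sum_x c x * (u x * v x) <= wnorm u * wnorm v.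
  rewrite -sqrtrM ?wsum_sqr_ge0 // (le_trans (ler_norm _)) // -sqrtr_sqr.
  by rewrite ler_sqrt ?mulr_ge0 ?wsum_sqr_ge0 // wsum_CauchySchwarz.
rewrite mulr2n; lra.
Qed.

Lemma wnorm_le_comb2 (a b : R) u v w : 0 <= a -> 0 <= b ->
  (forall x, `|w x| <= a * `|u x| + b * `|v x|) ->
  wnorm w <= a * wnorm u + b * wnorm v.
Proof.
move=> a0 b0 wuv; apply: le_trans (wnorm_le (v := fun x => a * `|u x| + b * `|v x|) _) _.
  by move=> x; rewrite [X in _ <= X]ger0_norm // addr_ge0 ?mulr_ge0.
apply: le_trans (wnormD _ _) _.
by rewrite !wnormZ !wnorm_normr !ger0_norm.
Qed.

Lemma wnorm_le_comb3 (a1 a2 a3 : R) u1 u2 u3 w : 0 <= a1 -> 0 <= a2 -> 0 <= a3 ->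
  (forall x, `|w x| <= a1 * `|u1 x| + a2 * `|u2 x| + a3 * `|u3 x|) ->
  wnorm w <= a1 * wnorm u1 + a2 * wnorm u2 + a3 * wnorm u3.
Proof.
move=> a10 a20 a30 wu.
pose s x := a1 * `|u1 x| + a2 * `|u2 x|.
have s_ge0 x : 0 <= s x by rewrite addr_ge0 ?mulr_ge0.
have s_le : wnorm s <= a1 * wnorm u1 + a2 * wnorm u2.
  by apply: wnorm_le_comb2 => // x; rewrite ger0_norm.
apply: le_trans (wnorm_le_comb2 (u := s) (v := u3) ler01 a30 _) _.
  by move=> x; rewrite mul1r [`|s x|]ger0_norm.
by rewrite mul1r lerD2r.
Qed.

End WeightedNorm.

Lemma enormE (R : realType) d (u : 'rV[R]_d) :
  enorm u = wnorm (fun _ => 1) (fun k => u 0 k).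
Proof. by rewrite /enorm /wnorm; under [in RHS]eq_bigr do rewrite mul1r. Qed.

Lemma pinormE (R : realType) n (pi x : 'cV[R]_n) :
  pinorm pi x = wnorm (fun i => (pi i 0)^-1) (fun i => x i 0).
Proof. by rewrite /pinorm /wnorm; under eq_bigr do rewrite mulrC. Qed.

Lemma pmnormE (R : realType) n d (pi : 'cV[R]_n) (X : 'M[R]_(n, d)) :
  pmnorm pi X = wnorm (fun i => (pi i 0)^-1) (fun i => enorm (row i X)).
Proof. by rewrite /pmnorm /wnorm; under eq_bigr do rewrite mulrC. Qed.

Lemma enorm_ge0 (R : realType) d (u : 'rV[R]_d) : 0 <= enorm u.
Proof. exact: sqrtr_ge0. Qed.

Lemma pinorm_ge0 (R : realType) n (pi x : 'cV[R]_n) : 0 <= pinorm pi x.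
Proof. exact: sqrtr_ge0. Qed.

Lemma pmnorm_ge0 (R : realType) n d (pi : 'cV[R]_n) (X : 'M[R]_(n, d)) :
  0 <= pmnorm pi X.
Proof. exact: sqrtr_ge0. Qed.

Lemma enorm_le_comb2 (R : realType) d (a b : R) (u v w : 'rV[R]_d) :
  0 <= a -> 0 <= b -> (forall k, `|w 0 k| <= a * `|u 0 k| + b * `|v 0 k|) ->
  enorm w <= a * enorm u + b * enorm v.
Proof. by move=> a0 b0 wuv; rewrite !enormE; apply: wnorm_le_comb2. Qed.

Lemma enorm_le_comb3 (R : realType) d (a1 a2 a3 : R) (u1 u2 u3 w : 'rV[R]_d) :
  0 <= a1 -> 0 <= a2 -> 0 <= a3 ->
  (forall k, `|w 0 k| <= a1 * `|u1 0 k| + a2 * `|u2 0 k| + a3 * `|u3 0 k|) ->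
  enorm w <= a1 * enorm u1 + a2 * enorm u2 + a3 * enorm u3.
Proof. by move=> a10 a20 a30 wu; rewrite !enormE; apply: wnorm_le_comb3. Qed.

Section PiNorm.
Variables (R : realType) (n : nat) (pi : 'cV[R]_n).
Hypothesis pi_gt0 : forall i, 0 < pi i 0.
Hypothesis pi_sum1 : \sum_i pi i 0 = 1.

Lemma pi_inv_ge0 i : 0 <= (pi i 0)^-1.
Proof. by rewrite invr_ge0 ltW. Qed.

Lemma pmnorm_le_comb2 d (a b : R) (X Y Z : 'M[R]_(n, d)) : 0 <= a -> 0 <= b ->
  (forall i, enorm (row i Z) <= a * enorm (row i X) + b * enorm (row i Y)) ->
  pmnorm pi Z <= a * pmnorm pi X + b * pmnorm pi Y.
Proof.
move=> a0 b0 ZXY; rewrite !pmnormE; apply: (wnorm_le_comb2 pi_inv_ge0 a0 b0) => i.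
by rewrite !ger0_norm ?enorm_ge0.
Qed.

Lemma pinorm_coord_le (x : 'cV[R]_n) j : `|x j 0| <= pinorm pi x.
Proof.
have pi_le1 : pi j 0 <= 1.
  by rewrite -pi_sum1 (bigD1 j) //= lerDl sumr_ge0 // => i _; rewrite ltW.
rewrite -sqrtr_sqr /pinorm ler_sqrt; last first.
  by rewrite sumr_ge0 // => i _; rewrite mulr_ge0 ?sqr_ge0 ?pi_inv_ge0.
rewrite (bigD1 j) //= -[X in X <= _]addr0 lerD //.
  by rewrite ler_peMr ?sqr_ge0 // invf_ge1.
by rewrite sumr_ge0 // => i _; rewrite mulr_ge0 ?sqr_ge0 ?pi_inv_ge0.
Qed.

Lemma pinorm_gt0 (x : 'cV[R]_n) : x != 0 -> 0 < pinorm pi x.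
Proof.
move=> x_neq0; rewrite lt_def pinorm_ge0 andbT; apply: contra x_neq0 => /eqP x0.
apply/eqP/matrixP => i k; rewrite (ord1 k) mxE; apply/eqP.
by rewrite -normr_le0 -x0 pinorm_coord_le.
Qed.

Lemma pinorm_mulmx_le (A : 'M[R]_n) (x : 'cV[R]_n) :
  pinorm pi (A *m x) <= pinorm pi (\col_i \sum_j `|A i j|) * pinorm pi x.
Proof.
have -> : pinorm pi (\col_i \sum_j `|A i j|) =
    wnorm (fun i => (pi i 0)^-1) (fun i => \sum_j `|A i j|).
  by rewrite pinormE; congr wnorm; apply/funext => i; rewrite mxE.
rewrite mulrC -[pinorm pi x]ger0_norm ?pinorm_ge0 // -wnormZ pinormE.
apply: (wnorm_le pi_inv_ge0) => i; rewrite [X in _ <= X]ger0_norm; last first.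
  by rewrite mulr_ge0 ?pinorm_ge0 ?sumr_ge0.
rewrite mxE mulr_sumr (le_trans (ler_norm_sum _ _ _)) // ler_sum // => j _.
by rewrite normrM mulrC ler_wpM2r ?pinorm_coord_le.
Qed.

Lemma pinorm_sigmaW_le (W : 'M[R]_n) (x : 'cV[R]_n) :
  pinorm pi ((W - Winf pi) *m x) <= sigmaW W pi * pinorm pi x.
Proof.
have [->|x_neq0] := eqVneq x 0.
  by rewrite mulmx0 /pinorm big1 ?sqrtr0 ?mulr0 // => i _; rewrite mxE expr0n mul0r.
rewrite -ler_pdivrMr ?pinorm_gt0 //; apply: ub_le_sup; last by exists x.
exists (pinorm pi (\col_i \sum_j `|(W - Winf pi) i j|)) => _ [y [y_neq0 ->]].
by rewrite ler_pdivrMr ?pinorm_gt0 ?pinorm_mulmx_le.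
Qed.

Lemma sigmaW_ge0 (W : 'M[R]_n) : (0 < n)%N -> 0 <= sigmaW W pi.
Proof.
move=> n_gt0; have one_neq0 : const_mx 1 != 0 :> 'cV[R]_n.
  by apply/eqP => /matrixP /(_ (Ordinal n_gt0) 0) /eqP; rewrite !mxE oner_eq0.
rewrite -(pmulr_lge0 _ (pinorm_gt0 one_neq0)).
exact: le_trans (pinorm_ge0 _ _) (pinorm_sigmaW_le W _).
Qed.

Lemma pmnorm_sqr d (X : 'M[R]_(n, d)) :
  pmnorm pi X ^+ 2 = \sum_k pinorm pi (col k X) ^+ 2.
Proof.
rewrite /pmnorm sqr_sqrtr; last first.
  by rewrite sumr_ge0 // => i _; rewrite divr_ge0 ?sqr_ge0 ?ltW.
have row_sqr i : enorm (row i X) ^+ 2 / pi i 0 = \sum_k X i k ^+ 2 / pi i 0.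
  rewrite /enorm sqr_sqrtr ?mulr_suml; last by rewrite sumr_ge0 // => k _; rewrite sqr_ge0.
  by apply: eq_bigr => k _; rewrite mxE.
rewrite (eq_bigr _ (fun i _ => row_sqr i)) exchange_big /=; apply: eq_bigr => k _.
rewrite /pinorm sqr_sqrtr; last first.
  by rewrite sumr_ge0 // => i _; rewrite divr_ge0 ?sqr_ge0 ?ltW.
by apply: eq_bigr => i _; rewrite !mxE.
Qed.

Lemma pmnorm_sigmaW_le (W : 'M[R]_n) d (X : 'M[R]_(n, d)) : (0 < n)%N ->
  pmnorm pi ((W - Winf pi) *m X) <= sigmaW W pi * pmnorm pi X.
Proof.
move=> n_gt0; have sigma_ge0 := sigmaW_ge0 W n_gt0.
rewrite -(ler_pXn2r (_ : (0 < 2)%N)) ?nnegrE ?mulr_ge0 ?pmnorm_ge0 //.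
rewrite exprMn !pmnorm_sqr mulr_sumr ler_sum // => k _.
rewrite colE -mulmxA -colE -exprMn ler_pXn2r ?nnegrE ?mulr_ge0 ?pinorm_ge0 //.
exact: pinorm_sigmaW_le.
Qed.

End PiNorm.

Lemma wbarE (R : realType) n d (X : 'M[R]_(n, d)) k :
  wbar X 0 k = n%:R^-1 * \sum_i X i k.
Proof. by rewrite /wbar mxE summxE; under eq_bigr do rewrite mxE. Qed.

Lemma Winf_mulmxE (R : realType) n d (pi : 'cV[R]_n) (X : 'M[R]_(n, d)) i k :
  (Winf pi *m X) i k = pi i 0 * \sum_j X j k.
Proof.
rewrite mxE mulr_sumr; apply: eq_bigr => j _.
by rewrite /Winf mxE big_ord1 mxE mulr1.
Qed.

Lemma Winf_mulmx (R : realType) n d (pi : 'cV[R]_n) (X : 'M[R]_(n, d)) :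
  (0 < n)%N -> Winf pi *m X = (n%:R *: pi) *m wbar X.
Proof.
move=> n_gt0; apply/matrixP => i k.
rewrite Winf_mulmxE mxE big_ord1 wbarE mxE mulrACA divff ?mul1r //.
by rewrite pnatr_eq0 -lt0n.
Qed.

Lemma Winf_pi (R : realType) n (pi : 'cV[R]_n) :
  \sum_i pi i 0 = 1 -> Winf pi *m pi = pi.
Proof.
by move=> pi_sum1; apply/matrixP => i k; rewrite Winf_mulmxE (ord1 k) pi_sum1 mulr1.
Qed.

Section ColumnStochastic.
Variables (R : realType) (n : nat) (W : 'M[R]_n) (pi : 'cV[R]_n).
Hypothesis W_colsum : forall j, \sum_i W i j = 1.

Lemma sum_col_mulmx d (X : 'M[R]_(n, d)) k : \sum_i (W *m X) i k = \sum_i X i k.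
Proof.
under eq_bigr do rewrite mxE.
by rewrite exchange_big /=; apply: eq_bigr => j _; rewrite -mulr_suml W_colsum mul1r.
Qed.

Lemma wbar_mulmx d (X : 'M[R]_(n, d)) : wbar (W *m X) = wbar X.
Proof. by apply/matrixP => i k; rewrite (ord1 i) !wbarE sum_col_mulmx. Qed.

Lemma consensus_error_mulmx d (X : 'M[R]_(n, d)) : (0 < n)%N ->
  W *m X - (n%:R *: pi) *m wbar (W *m X) = (W - Winf pi) *m X.
Proof. by move=> n_gt0; rewrite wbar_mulmx -Winf_mulmx // mulmxBl. Qed.

Lemma yseq_sum t : \sum_i yseq W t i 0 = n%:R.
Proof.
elim: t => [|t IH] /=; last by rewrite sum_col_mulmx.
by under eq_bigr do rewrite mxE; rewrite sumr_const card_ord.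
Qed.

Hypothesis W_pi : W *m pi = pi.
Hypothesis pi_sum1 : \sum_i pi i 0 = 1.

Lemma Winf_sub_mulmx_pi : (W - Winf pi) *m pi = 0.
Proof. by rewrite mulmxBl W_pi Winf_pi ?subrr. Qed.

Lemma yseq_dev_rec t :
  yseq W t.+1 - n%:R *: pi = (W - Winf pi) *m (yseq W t - n%:R *: pi).
Proof.
have Winf_y : Winf pi *m yseq W t = n%:R *: pi.
  by apply/matrixP => i k; rewrite Winf_mulmxE (ord1 k) yseq_sum mxE mulrC.
by rewrite mulmxBr -scalemxAr Winf_sub_mulmx_pi scaler0 subr0 mulmxBl Winf_y.
Qed.

Lemma yseq_dev_le t : (0 < n)%N -> (forall i, 0 < pi i 0) ->
  pinorm pi (yseq W t - n%:R *: pi) <=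
    sigmaW W pi ^+ t * pinorm pi (const_mx 1 - n%:R *: pi).
Proof.
move=> n_gt0 pi_gt0; elim: t => [|t IH]; first by rewrite expr0 mul1r.
rewrite yseq_dev_rec exprS -mulrA (le_trans (pinorm_sigmaW_le _ _ _ _)) //.
by rewrite ler_wpM2l ?sigmaW_ge0.
Qed.

End ColumnStochastic.

Section AveragingMatrix.
Variables (R : realType) (n : nat) (E : rel 'I_n).
Hypothesis E_refl : forall i, E i i.
Local Notation W := (Wmat R E).
Local Notation y := (yseq W).
Local Notation inv_n := (n%:R^-1 : R).

Lemma outdeg_gt0 j : (0 < outdeg E j)%N.
Proof. by apply/card_gt0P; exists j; rewrite inE; exact: E_refl. Qed.

Lemma Wmat_ge0 i j : 0 <= W i j.
Proof. by rewrite mxE; case: ifP => // _; rewrite invr_ge0 ler0n. Qed.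

Lemma Wmat_edge_ge i j : E j i -> inv_n <= W i j.
Proof.
move=> Eji; have outdeg_le : (outdeg E j <= n)%N by rewrite (leq_trans (max_card _)) ?card_ord.
rewrite mxE Eji lef_pV2 ?ler_nat // posrE ltr0n ?outdeg_gt0 //.
exact: leq_trans (outdeg_gt0 j) outdeg_le.
Qed.

Lemma Wmat_colsum j : \sum_i W i j = 1.
Proof.
under eq_bigr do rewrite mxE.
rewrite -big_mkcond sumr_const.
have -> : #|E j| = outdeg E j by apply: eq_card => i; rewrite [RHS]inE asboolb.
by rewrite -(mulr_natr (outdeg E j)%:R^-1) mulVf // pnatr_eq0 -lt0n outdeg_gt0.
Qed.

Lemma yseq_ge0 t i : 0 <= y t i 0.
Proof.
elim: t i => [|t IH] i /=; first by rewrite mxE ler01.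
by rewrite mxE sumr_ge0 // => j _; rewrite mulr_ge0 ?Wmat_ge0.
Qed.

Lemma yseq_edge_ge s i j : E j i -> inv_n * y s j 0 <= y s.+1 i 0.
Proof.
move=> Eji /=; rewrite mxE (bigD1 j) //= -[X in X <= _]addr0 lerD //.
  by rewrite ler_wpM2r ?yseq_ge0 ?Wmat_edge_ge.
by rewrite sumr_ge0 // => k _; rewrite mulr_ge0 ?Wmat_ge0 ?yseq_ge0.
Qed.

Lemma yseq_stay_ge s m i : inv_n ^+ m * y s i 0 <= y (s + m) i 0.
Proof.
elim: m => [|m IH]; first by rewrite expr0 mul1r addn0.
rewrite addnS exprS -mulrA (le_trans _ (yseq_edge_ge _ (E_refl i))) //.
by rewrite ler_wpM2l ?invr_ge0 ?ler0n.
Qed.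

Lemma yseq_path_ge s j p :
  path E j p -> inv_n ^+ size p * y s j 0 <= y (s + size p) (last j p) 0.
Proof.
elim: p j s => [|k p IH] j s /=; first by rewrite expr0 mul1r addn0.
case/andP => Ejk /(IH k s.+1); rewrite -addSnnS; apply: le_trans.
by rewrite exprSr -mulrA ler_wpM2l ?exprn_ge0 ?invr_ge0 ?ler0n ?yseq_edge_ge.
Qed.

(* A shortest path has fewer than n edges; self-loops pad it to exactly n steps. *)
Lemma yseq_connect_ge s i j : connect E j i -> inv_n ^+ n * y s j 0 <= y (s + n) i 0.
Proof.
case/connectP => p /shortenP [q Eq uniq_q _] ->.
have q_lt : (size q < n)%N.
  by have := max_card (mem (j :: q)); rewrite (card_uniqP uniq_q) card_ord.
have -> : (s + n = s + size q + (n - size q))%N by rewrite -addnA subnKC // ltnW.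
have -> : inv_n ^+ n = inv_n ^+ (n - size q) * inv_n ^+ size q.
  by rewrite -exprD subnK // ltnW.
rewrite -mulrA; apply: le_trans (yseq_stay_ge _ _ _).
by rewrite ler_wpM2l ?exprn_ge0 ?invr_ge0 ?ler0n ?yseq_path_ge.
Qed.

Hypothesis E_connect : forall i j, connect E i j.

Lemma yseq_ge t i : inv_n ^+ n <= y t i 0.
Proof.
have n_gt0 : (0 < n)%N := leq_ltn_trans (leq0n i) (ltn_ord i).
have inv_n_le1 : inv_n <= 1 by rewrite invf_le1 ?ler1n ?ltr0n.
have [t_lt|t_ge] := ltnP t n.
  have := yseq_stay_ge 0 t i; rewrite add0n mxE mulr1; apply: le_trans.
  by rewrite ler_wiXn2l ?invr_ge0 ?ler0n // ltnW.
have sum_le : \sum_j inv_n ^+ n * y (t - n) j 0 <= \sum_(j < n) y (t - n + n) i 0.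
  by apply: ler_sum => j _; exact: yseq_connect_ge.
rewrite -mulr_sumr (yseq_sum Wmat_colsum) sumr_const card_ord subnK // in sum_le.
by rewrite -(ler_pM2r (_ : 0 < n%:R)) ?ltr0n // [X in _ <= X]mulr_natr.
Qed.

Lemma yseq_gt0 t i : 0 < y t i 0.
Proof.
apply: lt_le_trans (yseq_ge t i).
by rewrite exprn_gt0 // invr_gt0 ltr0n (leq_ltn_trans (leq0n i) (ltn_ord i)).
Qed.

Lemma yseq_inv_le_deltaY t i : (y t i 0)^-1 <= deltaY W.
Proof.
have n_gt0 : (0 < n)%N := leq_ltn_trans (leq0n i) (ltn_ord i).
apply: ub_le_sup; last by exists t, i.
exists (inv_n ^+ n)^-1 => _ [s [j ->]].
by rewrite lef_pV2 ?posrE ?yseq_gt0 ?yseq_ge // exprn_gt0 // invr_gt0 ltr0n.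
Qed.

End AveragingMatrix.

Lemma enorm_le_sub_add (R : realType) d (u v : 'rV[R]_d) :
  enorm u <= enorm (u - v) + enorm v.
Proof.
rewrite -[enorm (u - v)]mul1r -[enorm v]mul1r.
apply: enorm_le_comb2 => // k; rewrite !mul1r !mxE.
by have := ler_normD (u 0 k - v 0 k) (v 0 k); rewrite subrK.
Qed.

Lemma pmnorm_subZ_le (R : realType) n d (pi : 'cV[R]_n) (a : R) (X Y : 'M[R]_(n, d)) :
  (forall i, 0 < pi i 0) -> 0 <= a ->
  pmnorm pi (X - a *: Y) <= pmnorm pi X + a * pmnorm pi Y.
Proof.
move=> pi_gt0 a_ge0; rewrite -[pmnorm pi X]mul1r.
apply: pmnorm_le_comb2 => // i; apply: enorm_le_comb2 => // k.
by rewrite !mxE mul1r (le_trans (ler_normB _ _)) // normrM ger0_norm.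
Qed.

Section OneStep.
Variables (R : realType) (n d : nat) (pi : 'cV[R]_n).
Hypothesis n_gt0 : (0 < n)%N.
Hypothesis pi_gt0 : forall i, 0 < pi i 0.
Hypothesis pi_sum1 : \sum_i pi i 0 = 1.
Local Notation npi := (n%:R *: pi).

Lemma consensus_step (W : 'M[R]_n) (alpha : R) (X G : 'M[R]_(n, d)) :
  (forall j, \sum_i W i j = 1) -> W *m pi = pi -> 0 <= alpha ->
  pmnorm pi (W *m (X - alpha *: G) - npi *m wbar (W *m (X - alpha *: G))) <=
    sigmaW W pi * pmnorm pi (X - npi *m wbar X) + alpha * (sigmaW W pi * pmnorm pi G).
Proof.
move=> W_colsum W_pi alpha_ge0; rewrite consensus_error_mulmx //.
have -> : (W - Winf pi) *m (X - alpha *: G) =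
    (W - Winf pi) *m (X - npi *m wbar X) - alpha *: ((W - Winf pi) *m G).
  by rewrite !mulmxBr mulmxA -!scalemxAr Winf_sub_mulmx_pi // !(scaler0, mul0mx, subr0).
apply: le_trans (pmnorm_subZ_le _ _ pi_gt0 alpha_ge0) _.
by rewrite lerD ?ler_wpM2l ?pmnorm_sigmaW_le.
Qed.

Lemma gradF_pmnorm_le (g : 'I_n -> 'rV[R]_d -> 'rV[R]_d) (L : R) (Z : 'M[R]_(n, d)) w :
  0 <= L -> (forall i x y, enorm (g i x - g i y) <= L * enorm (x - y)) ->
  pmnorm pi (gradF g Z) <=
    L * pmnorm pi (Z - \matrix_(i < n) w) + pmnorm pi (gradF g (\matrix_(i < n) w)).
Proof.
move=> L_ge0 g_lip; rewrite -[X in _ <= _ + X]mul1r.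
apply: pmnorm_le_comb2 => // i; rewrite !rowK mul1r.
have -> : row i (Z - \matrix_(i < n) w) = row i Z - w.
  by apply/matrixP => a k; rewrite (ord1 a) !mxE.
exact: le_trans (enorm_le_sub_add _ (g i w)) (lerD (g_lip _ _ _) (lexx _)).
Qed.

Lemma debias_pmnorm_le (X : 'M[R]_(n, d)) (y : 'cV[R]_n) (v w : 'rV[R]_d) (delta : R) :
  (forall i, 0 < y i 0) -> (forall i, (y i 0)^-1 <= delta) ->
  pmnorm pi (\matrix_(i, k) (X i k / y i 0) - \matrix_(i < n) w) <=
    delta * pmnorm pi (X - npi *m v) + delta * enorm v * pinorm pi (y - npi)
    + enorm (v - w) * Num.sqrt (\sum_j (pi j 0)^-1).
Proof.
move=> y_gt0 y_inv_le.
have delta_ge0 : 0 <= delta by rewrite (le_trans _ (y_inv_le (Ordinal n_gt0))) ?invr_ge0 ?ltW.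
have -> : Num.sqrt (\sum_j (pi j 0)^-1) = wnorm (fun i => (pi i 0)^-1) (fun _ => 1).
  by rewrite /wnorm; under [in RHS]eq_bigr do rewrite expr1n mulr1.
rewrite !pmnormE pinormE.
apply: (wnorm_le_comb3 (pi_inv_ge0 pi_gt0)); rewrite ?mulr_ge0 ?enorm_ge0 // => i.
rewrite normr1 mulr1 !(ger0_norm (enorm_ge0 _)).
have yi_inv_ge0 : 0 <= (y i 0)^-1 by rewrite invr_ge0 ltW.
apply: le_trans (enorm_le_comb3 (u1 := row i (X - npi *m v)) (u2 := v) (u3 := v - w)
  yi_inv_ge0 (mulr_ge0 yi_inv_ge0 (normr_ge0 ((y - npi) i 0))) ler01 _) _.
  move=> k; rewrite !mxE big_ord1 !mxE mul1r.
  have -> : X i k / y i 0 - w 0 k = (y i 0)^-1 * (X i k - n%:R * pi i 0 * v 0 k)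
      + (y i 0)^-1 * (n%:R * pi i 0 - y i 0) * v 0 k + (v 0 k - w 0 k).
    by field; rewrite gt_eqF.
  apply: le_trans (ler_normD _ _) _; apply: lerD => //.
  apply: le_trans (ler_normD _ _) _.
  by rewrite !normrM ger0_norm // (distrC (y i 0)).
rewrite mul1r lerD2r lerD ?ler_wpM2r ?enorm_ge0 //.
by rewrite mulrAC ler_wpM2r ?ler_wpM2r ?enorm_ge0.
Qed.

End OneStep.

Unset Implicit Arguments.

Theorem proposition5p2 (R : realType) (n d : nat) (E : rel 'I_n)
  (pi : 'cV[R]_n)
  (f : 'I_n -> 'rV[R]_d -> R) (g : 'I_n -> 'rV[R]_d -> 'rV[R]_d)
  (Li : 'I_n -> R) (beta alpha : R) (wstar : 'rV[R]_d) (w0 : 'M[R]_(n, d)) :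
  (0 < n)%N ->
  (* graph: self-loop at every vertex, strongly connected *)
  (forall i, E i i) ->
  (forall i j, connect E i j) ->
  (* pi: positive, normalized, W pi = pi *)
  Wmat R E *m pi = pi ->
  (forall i, 0 < pi i 0) ->
  \sum_(i < n) pi i 0 = 1 ->
  (* g i is the gradient of f i *)
  (forall i x, differentiable (f i) x) ->
  (forall i x v, derive (f i) x v = dotv (g i x) v) ->
  (* (F1) *)
  (forall i x y, enorm (g i x - g i y) <= Li i * enorm (x - y)) ->
  (* (F2): f = (1/n) sum f_i is beta-strongly convex *)
  0 < beta ->
  (let fbar := fun x => (n%:R)^-1 * \sum_(i < n) f i x in
   forall x y (lam : R), 0 <= lam <= 1 ->
     fbar (lam *: x + (1 - lam) *: y) <=
       lam * fbar x + (1 - lam) * fbar y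
       - beta / 2 * lam * (1 - lam) * enorm (x - y) ^+ 2) ->
  (* w_* minimizes f *)
  (forall x, (n%:R)^-1 * \sum_(i < n) f i wstar <= (n%:R)^-1 * \sum_(i < n) f i x) ->
  0 < alpha ->
  let W := Wmat R E in
  let L := \big[Num.max/0]_(i < n) Li i in
  let sigma := sigmaW W pi in
  let delta := deltaY W in
  let w := wseq W g alpha w0 in
  let npi := n%:R *: pi in
  let c1 := pinorm pi (const_mx 1 - npi) in
  let D1 := fun t : nat => delta * c1 * sigma ^+ t + Num.sqrt (\sum_(j < n) (pi j 0)^-1) in
  let D2 := fun t : nat => L * delta * c1 * sigma ^+ t * enorm wstar
                 + pmnorm pi (gradF g (\matrix_(i < n) wstar)) in
  forall t : nat,
    pmnorm pi (w t.+1 - npi *m wbar (w t.+1))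
      <= sigma * (1 + alpha * L * delta) * pmnorm pi (w t - npi *m wbar (w t))
         + alpha * L * sigma * D1 t * enorm (wbar (w t) - wstar)
         + alpha * sigma * D2 t.
Proof.
move=> n_gt0 E_refl E_connect W_pi pi_gt0 pi_sum1 _ _ g_lip _ _ _ alpha_gt0
  W L sigma delta w npi c1 D1 D2 t.
have -> : w t.+1 = W *m (w t - alpha *: gradF g (\matrix_(i, k) (w t i k / yseq W t i 0))).
  by [].
rewrite /D1 /D2; set X := w t; set y := yseq W t; set Z := \matrix_(i, k) (X i k / y i 0).
set A := pmnorm pi (X - npi *m wbar X); set B := enorm (wbar X - wstar).
set S := Num.sqrt (\sum_j (pi j 0)^-1).
set Gs := pmnorm pi (gradF g (\matrix_(i < n) wstar)); set K := sigma ^+ t * c1.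
have W_colsum := Wmat_colsum R E_refl.
have sigma_ge0 : 0 <= sigma := sigmaW_ge0 pi_gt0 pi_sum1 W n_gt0.
have L_ge0 : 0 <= L := bigmax_ge_id _ _ _ _.
have g_lipL i u v : enorm (g i u - g i v) <= L * enorm (u - v).
  by rewrite (le_trans (g_lip i u v)) ?ler_wpM2r ?enorm_ge0 ?le_bigmax.
have y_gt0 := yseq_gt0 R E_refl E_connect t.
have y_inv_le := yseq_inv_le_deltaY R E_refl E_connect t.
have delta_ge0 : 0 <= delta.
  by rewrite (le_trans _ (y_inv_le (Ordinal n_gt0))) ?invr_ge0 ?ltW.
set Qb := delta * A + delta * (B + enorm wstar) * K + B * S.
have Q_le : pmnorm pi (Z - \matrix_(i < n) wstar) <= Qb.
  apply: le_trans (debias_pmnorm_le n_gt0 pi_gt0 X (wbar X) wstar y_gt0 y_inv_le) _.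
  rewrite lerD2r lerD2l -!mulrA ler_wpM2l // ler_pM ?enorm_ge0 ?pinorm_ge0 //.
    exact: enorm_le_sub_add.
  exact: yseq_dev_le W_colsum W_pi pi_sum1 t n_gt0 pi_gt0.
apply: le_trans (consensus_step n_gt0 pi_gt0 pi_sum1 _ _ W_colsum W_pi (ltW alpha_gt0)) _.
have -> : sigma * (1 + alpha * L * delta) * A
    + alpha * L * sigma * (delta * c1 * sigma ^+ t + S) * B
    + alpha * sigma * (L * delta * c1 * sigma ^+ t * enorm wstar + Gs)
  = sigma * A + alpha * (sigma * (L * Qb + Gs)) by rewrite /Qb /K; ring.
rewrite lerD2l; apply: ler_wpM2l; first exact: ltW.
apply: ler_wpM2l => //; apply: le_trans (gradF_pmnorm_le pi_gt0 Z wstar L_ge0 g_lipL) _.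
by rewrite lerD2r ler_wpM2l.
Qed.
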